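(* Let $f\colon\mathbb{R}^d\to\mathbb{R}\cup\{\infty\}$ be a lower semicontinuous convex function, let $Q\subseteq\mathbb{R}^d$ be a nonempty closed convex set contained in the domain of $f$, and assume the set $X^*$ of minimizers of $f$ over $Q$ is nonempty, with minimum value $f^*$. Let $g(x;\xi)$ be a stochastic subgradient oracle, i.e. $\mathbb{E}_{\xi\sim D}\,g(x;\xi)\in\partial f(x)$ for all $x\in Q$, and suppose there are constants $L_0,L_1\ge 0$ with $$\mathbb{E}_{\xi}\|g(x;\xi)\|^2\le L_0^2+L_1(f(x)-f^* )\qquad\text{for all }x\in Q.$$ Fix $x^*\in X^*$, $x_0\in Q$, and consider the iteration $x_{k+1}=P_Q(x_k-\alpha_k g(x_k;\xi_k))$ with $\xi_k\sim D$ i.i.d. Then for any positive sequence $(\alpha_k)$ with $L_1\alpha_k<2$ for all $k$, and any $T\ge 0$, $$\mathbb{E}_{\xi_{0\dots T}}\left[f\left(\frac{\sum_{k=0}^T\alpha_k(2-L_1\alpha_k)x_k}{\sum_{k=0}^T\alpha_k(2-L_1\alpha_k)}\right)-f^*\right]\le\frac{\|x_0-x^*\|^2+L_0^2\sum_{k=0}^T\alpha_k^2}{\sum_{k=0}^T\alpha_k(2-L_1\alpha_k)}.$$ In particular, if $L_0>0$ and the constant step size $\alpha_k=\|x_0-x^*\|/(L_0\sqrt{T+1})$ satisfies $L_1\alpha_k<2$, then $$\mathbb{E}_{\xi_{0\dots T}}\left[f\left(\frac{1}{T+1}\sum_{k=0}^Tx_k\right)-f^*\right]\le\frac{L_0\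|x_0-x^*\|}{\sqrt{T+1}}\cdot\frac{2}{2-L_1\alpha_k}.$$
   Context: $P_Q$ denotes orthogonal projection onto $Q$; $\partial f(x)=\{g: f(y)\ge f(x)+g^T(y-x)\ \forall y\in\mathbb{R}^d\}$. $D$ is a distribution from which the samples $\xi_k$ are drawn independently; $\mathbb{E}_{\xi_{0\dots T}}$ denotes expectation over $\xi_0,\dots,\xi_T$. *)

From HB Require Import structures.
From mathcomp Require Import all_boot all_order all_algebra.
From mathcomp Require Import all_classical all_reals all_analysis.
Set Implicit Arguments. Unset Strict Implicit. Unset Printing Implicit Defensive.
Import Order.TTheory GRing.Theory Num.Theory numFieldNormedType.Exports.
Local Open Scope classical_set_scope.
Local Open Scope ring_scope.

(* R^d is represented by row vectors 'rV[R]_d; its topology is the library's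
   (product) topology on matrices, which is the Euclidean topology. *)

Section Euclid.
Variables (R : realType) (d : nat).

Definition dotv (u v : 'rV[R]_d) : R := \sum_(i < d) u 0 i * v 0 i.
Definition enorm (u : 'rV[R]_d) : R := Num.sqrt (dotv u u).

Definition convex_efun (f : 'rV[R]_d -> \bar R) : Prop :=
  forall (x y : 'rV[R]_d) (t : R), 0 < t < 1 ->
    (f (t *: x + (1 - t) *: y)%R <= t%:E * f x + (1 - t)%:E * f y)%E.

Definition is_proj (Q : set 'rV[R]_d) (x y : 'rV[R]_d) : Prop :=
  Q y /\ forall z, Q z -> enorm (x - y) <= enorm (x - z).

Definition subdiff (f : 'rV[R]_d -> \bar R) (x : 'rV[R]_d) : set 'rV[R]_d :=
  [set g | forall y, (f x + (dotv g (y - x))%:E <= f y)%E].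

Definition borelV := g_sigma_algebraType (@open 'rV[R]_d).

End Euclid.

Section Oracle.
Variables (R : realType) (d : nat) (dX : measure_display) (Xi : measurableType dX).
Variable D : probability Xi R.

Definition mean_oracle (g : 'rV[R]_d -> Xi -> 'rV[R]_d) (x : 'rV[R]_d) : 'rV[R]_d :=
  \row_(i < d) fine (\int[D]_xi (g x xi 0 i)%:E)%E.

(* Expectation over n i.i.d. samples xi_0, ..., xi_(n-1) ~ D of a function F of
   the sample list [:: xi_0; ...; xi_(n-1)], as the iterated integral
   \int D(dxi_0) \int D(dxi_1) ... F [:: xi_0; ...; xi_(n-1)]
   (the integral against the product measure D^(n)). *)
Fixpoint iid_expect (n : nat) (F : seq Xi -> \bar R) : \bar R :=
  match n with
  | 0 => F [::]
  | n'.+1 => (\int[D]_xi iid_expect n' (fun s => F (xi :: s)))%E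
  end.

(* projected stochastic subgradient method:
   x_(k+1) = P (x_k - alpha_k g(x_k; xi_k)); sgd_run k x s runs the method from
   x = x_k, consuming the samples s = [:: xi_k; xi_(k+1); ...]. *)
Fixpoint sgd_run (P : 'rV[R]_d -> 'rV[R]_d) (g : 'rV[R]_d -> Xi -> 'rV[R]_d)
  (alpha : nat -> R) (k : nat) (x : 'rV[R]_d) (s : seq Xi) : 'rV[R]_d :=
  match s with
  | [::] => x
  | xi :: s' => sgd_run P g alpha k.+1 (P (x - alpha k *: g x xi)) s'
  end.

Definition sgd_iter P g alpha (x0 : 'rV[R]_d) (k : nat) (s : seq Xi) : 'rV[R]_d :=
  sgd_run P g alpha 0 x0 (take k s).

End Oracle.

From HB Require Import structures.
From mathcomp Require Import all_boot all_order all_algebra.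
From mathcomp Require Import all_classical all_reals all_analysis.
From mathcomp Require Import ring lra measurable_realfun.
Import Order.TTheory GRing.Theory Num.Theory numFieldNormedType.Exports.
Local Open Scope classical_set_scope.
Local Open Scope ring_scope.
Set Implicit Arguments. Unset Strict Implicit. Unset Printing Implicit Defensive.

(* Projection onto Q does not increase the distance to xstar, so one step gives
     E|x_(k+1) - xstar|^2 <= |x_k - xstar|^2 - 2 a_k <x_k - xstar, E g(x_k)>
                             + a_k^2 (L0^2 + L1 (f(x_k) - fstar)),
   and the subgradient inequality bounds the inner product below by f(x_k) - fstar.
   Hence a_k (2 - L1 a_k) (f(x_k) - fstar) + E|x_(k+1) - xstar|^2
   <= |x_k - xstar|^2 + L0^2 a_k^2, which telescopes inside the iterated
   expectation. Jensen's inequality for the weighted average of the iterates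
   gives the first bound; the second is its instance for the constant step. *)

Section Euclid.
Variables (R : realType) (d : nat).
Implicit Types u v w : 'rV[R]_d.

Lemma dotvC u v : dotv u v = dotv v u.
Proof. by apply: eq_bigr => i _; rewrite mulrC. Qed.

Lemma dotvDl u v w : dotv (u + v) w = dotv u w + dotv v w.
Proof. by rewrite /dotv -big_split; apply: eq_bigr => i _; rewrite !mxE mulrDl. Qed.

Lemma dotvZl (a : R) u w : dotv (a *: u) w = a * dotv u w.
Proof. by rewrite /dotv mulr_sumr; apply: eq_bigr => i _; rewrite !mxE mulrA. Qed.

Lemma dotvNl u w : dotv (- u) w = - dotv u w.
Proof. by rewrite -scaleN1r dotvZl mulN1r. Qed.

Lemma dotvDr u v w : dotv w (u + v) = dotv w u + dotv w v.
Proof. by rewrite dotvC dotvDl !(dotvC w). Qed.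

Lemma dotvZr (a : R) u w : dotv w (a *: u) = a * dotv w u.
Proof. by rewrite dotvC dotvZl dotvC. Qed.

Lemma dotv_ge0 u : 0 <= dotv u u.
Proof. by apply: sumr_ge0 => i _; rewrite -expr2 sqr_ge0. Qed.

Lemma dotv_sqrD u v : dotv (u + v) (u + v) = dotv u u + 2 * dotv u v + dotv v v.
Proof. by rewrite dotvDl !dotvDr (dotvC v u); ring. Qed.

Lemma enorm_ge0 u : 0 <= enorm u.
Proof. exact: sqrtr_ge0. Qed.

Lemma enorm_sqr u : enorm u ^+ 2 = dotv u u.
Proof. by rewrite sqr_sqrtr // dotv_ge0. Qed.

Lemma enorm_eq0 u : (enorm u == 0) = (u == 0).
Proof.
rewrite -sqrf_eq0 enorm_sqr psumr_eq0 => [|i _]; last by rewrite -expr2 sqr_ge0.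
apply/allP/eqP => [u0|-> i _]; last by rewrite mxE mul0r eqxx.
apply/rowP => i; have /implyP/(_ isT) := u0 i (mem_index_enum i).
by rewrite mulf_eq0 orbb mxE => /eqP.
Qed.

Lemma enorm0 : enorm (0 : 'rV[R]_d) = 0.
Proof. by apply/eqP; rewrite enorm_eq0. Qed.

Lemma ler_enorm u v : (enorm u <= enorm v) = (dotv u u <= dotv v v).
Proof. by rewrite -!enorm_sqr ler_sqr ?nnegrE ?enorm_ge0. Qed.

End Euclid.

Lemma convex_set_comb (R : numDomainType) (M : lmodType R) (A : set M)
    (x y : M) (t : R) :
  convex_set A -> A x -> A y -> 0 <= t <= 1 -> A (t *: x + (1 - t) *: y).
Proof.
move=> cA Ax Ay /andP[t0 t1].
by have := cA x y (Itv.mk (itv01_subdef t0 t1)); rewrite !inE; apply.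
Qed.

Lemma ler0_if_le_small_multiples (R : realFieldType) (c B : R) : 0 <= B ->
  (forall t, 0 < t < 1 -> c <= t * B) -> c <= 0.
Proof.
move=> B0 small; rewrite leNgt; apply/negP => c0.
pose t := c / (2 * (c + B)).
have t0 : 0 < t by rewrite divr_gt0 // mulr_gt0 // ltr_wpDr.
have t1 : t < 1 by rewrite ltr_pdivrMr ?mulr_gt0 ?ltr_wpDr //; lra.
have := small t; rewrite t0 t1 => /(_ isT).
have ctB : 2 * t * (c + B) = c by rewrite /t; field; lra.
have : 0 < t * c by rewrite mulr_gt0.
nra.
Qed.

Section Projection.
Variables (R : realType) (d : nat) (Q : set 'rV[R]_d).
Hypothesis cQ : convex_set Q.

Lemma proj_variational y p z : is_proj Q y p -> Q z -> dotv (y - p) (z - p) <= 0.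
Proof.
move=> [Qp p_min] Qz.
suff : 2 * dotv (y - p) (z - p) <= 0 by lra.
apply: (ler0_if_le_small_multiples (dotv_ge0 (z - p))) => t /andP[t0 t1].
have Qq : Q (t *: z + (1 - t) *: p) by apply: convex_set_comb => //; rewrite !ltW.
have := p_min _ Qq; rewrite ler_enorm.
have -> : y - (t *: z + (1 - t) *: p) = (y - p) + (- t) *: (z - p).
  by apply/rowP => i; rewrite !mxE; ring.
rewrite (dotv_sqrD (y - p)) !dotvZl !dotvZr => descent.
have : t * (2 * dotv (y - p) (z - p)) <= t * (t * dotv (z - p) (z - p)) by nra.
by rewrite ler_pM2l.
Qed.

Lemma proj_sqr_dist_le y p z : is_proj Q y p -> Q z ->
  dotv (p - z) (p - z) <= dotv (y - z) (y - z).
Proof.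
move=> yp Qz; have := proj_variational yp Qz.
rewrite -[z - p]opprB dotvC dotvNl => obtuse.
have -> : y - z = (p - z) + (y - p) by rewrite [RHS]addrC addrA subrK.
by rewrite (dotv_sqrD (p - z)); have := dotv_ge0 (y - p); lra.
Qed.

Lemma proj_id y p : is_proj Q y p -> Q y -> p = y.
Proof.
move=> [_ p_min] Qy; have := p_min _ Qy; rewrite subrr enorm0 => yp0.
by apply/esym/eqP; rewrite -subr_eq0 -enorm_eq0 eq_le yp0 enorm_ge0.
Qed.

End Projection.

Lemma sumr_ord_gt0 (R : numDomainType) (F : nat -> R) n :
  (forall k, 0 < F k) -> 0 < \sum_(k < n.+1) F k.
Proof.
move=> F0; rewrite big_ord_recl; apply: (lt_le_trans (F0 0%N)).
by rewrite lerDl; apply: sumr_ge0 => i _; exact: ltW.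
Qed.

Lemma scale_mean_const (R : numFieldType) (V : lmodType R) n (c : R) (v : nat -> V) :
  c != 0 ->
  (\sum_(k < n.+1) c)^-1 *: \sum_(k < n.+1) c *: v k = (n.+1)%:R^-1 *: \sum_(k < n.+1) v k.
Proof.
move=> c0; rewrite sumr_const card_ord -scaler_sumr scalerA -[c *+ _]mulr_natr invfM.
by rewrite mulrAC mulVf ?mul1r.
Qed.

Section ConvexOnDomain.
Variables (R : realType) (d : nat) (f : 'rV[R]_d -> \bar R) (Q : set 'rV[R]_d).
Hypothesis f_neqNy : forall x, f x != -oo%E.
Hypothesis f_dom : forall x, Q x -> (f x < +oo)%E.
Hypothesis f_convex : convex_efun f.
Hypothesis cQ : convex_set Q.

Lemma dom_fin_num x : Q x -> f x \is a fin_num.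
Proof. by move=> Qx; rewrite fin_numE f_neqNy lt_eqF ?f_dom. Qed.

Lemma convex_fine x y t : Q x -> Q y -> 0 < t < 1 ->
  fine (f (t *: x + (1 - t) *: y)) <= t * fine (f x) + (1 - t) * fine (f y).
Proof.
move=> Qx Qy /[dup] t01 /andP[t0 t1].
have Qz : Q (t *: x + (1 - t) *: y) by apply: convex_set_comb => //; rewrite !ltW.
by rewrite -lee_fin EFinD !EFinM !fineK ?dom_fin_num //; exact: f_convex.
Qed.

Lemma jensen_dom (w : nat -> R) (x : nat -> 'rV[R]_d) n :
  (forall k, 0 < w k) -> (forall k, Q (x k)) ->
  Q ((\sum_(k < n.+1) w k)^-1 *: \sum_(k < n.+1) w k *: x k) /\
  fine (f ((\sum_(k < n.+1) w k)^-1 *: \sum_(k < n.+1) w k *: x k)) <=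
    (\sum_(k < n.+1) w k)^-1 * \sum_(k < n.+1) w k * fine (f (x k)).
Proof.
move=> w_gt0 Qx; elim: n => [|n [QA fA]].
  have w0 : w 0%N != 0 by rewrite gt_eqF.
  by rewrite !big_ord1 scalerA mulrA !mulVf ?scale1r ?mul1r.
rewrite !(big_ord_recr n.+1) /=.
set S := \sum_(i < n.+1) w i; set A := \sum_(i < n.+1) w i *: x i.
set B := \sum_(i < n.+1) w i * fine (f (x i)).
have S_gt0 : 0 < S := sumr_ord_gt0 n w_gt0.
have SW_gt0 : 0 < S + w n.+1 by rewrite addr_gt0.
pose t := S / (S + w n.+1).
have t01 : 0 < t < 1 by rewrite /t divr_gt0 //= ltr_pdivrMr // mul1r ltrDl.
have -> : (S + w n.+1)^-1 *: (A + w n.+1 *: x n.+1) =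
          t *: (S^-1 *: A) + (1 - t) *: x n.+1.
  rewrite scalerA scalerDr scalerA; congr (_ *: _ + _ *: _); rewrite /t; field.
    by rewrite !gt_eqF.
  by rewrite gt_eqF.
split; first by apply: convex_set_comb => //; case/andP: t01 => t0 t1; rewrite !ltW.
apply: (le_trans (convex_fine QA (Qx n.+1) t01)).
have -> : (S + w n.+1)^-1 * (B + w n.+1 * fine (f (x n.+1))) =
          t * (S^-1 * B) + (1 - t) * fine (f (x n.+1)).
  by rewrite /t; field; rewrite !gt_eqF.
by rewrite lerD2r ler_pM2l //; case/andP: t01.
Qed.

End ConvexOnDomain.

Local Open Scope ereal_scope.

(* No measurability is required: the integral of a nonnegative function is
   the supremum of the integrals of its simple minorants. *)
Lemma ge0_le_integralT dT (T : measurableType dT) (R : realType)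
    (mu : {measure set T -> \bar R}) (f1 f2 : T -> \bar R) :
  (forall x, 0 <= f1 x) -> (forall x, f1 x <= f2 x) ->
  \int[mu]_x f1 x <= \int[mu]_x f2 x.
Proof.
move=> f10 f12; rewrite !ge0_integralTE // => [|x]; last exact: le_trans (f10 x) (f12 x).
apply: le_ereal_sup => _ [h hf1 <-]; exists h => // x; exact: le_trans (hf1 x) (f12 x).
Qed.

Section IidExpectation.
Variables (R : realType) (dX : measure_display) (Xi : measurableType dX).
Variable D : probability Xi R.

Lemma iid_expect_ge0 n (F : seq Xi -> \bar R) :
  (forall s, size s = n -> 0 <= F s) -> 0 <= iid_expect D n F.
Proof.
elim: n F => [|n IH] F F0 /=; first exact: F0.
by apply: integral_ge0 => xi _; apply: IH => s sn; apply: F0; rewrite /= sn.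
Qed.

Lemma le_iid_expect n (F G : seq Xi -> \bar R) :
  (forall s, size s = n -> 0 <= F s) -> (forall s, size s = n -> F s <= G s) ->
  iid_expect D n F <= iid_expect D n G.
Proof.
elim: n F G => [|n IH] F G F0 FG /=; first exact: FG.
apply: ge0_le_integralT => xi.
  by apply: iid_expect_ge0 => s sn; apply: F0; rewrite /= sn.
by apply: IH => s sn; [apply: F0 | apply: FG]; rewrite /= sn.
Qed.

Lemma iid_expect0 n : iid_expect D n (fun _ => 0) = 0.
Proof.
elim: n => [|n IH] //=.
by rewrite (eq_integral (cst 0)) ?integral0 // => xi _; exact: IH.
Qed.

End IidExpectation.

Section OracleMoments.
Variables (R : realType) (d : nat) (dX : measure_display) (Xi : measurableType dX).
Variables (D : probability Xi R) (g : 'rV[R]_d -> Xi -> 'rV[R]_d) (x : 'rV[R]_d) (M : R).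
Hypothesis g_meas : forall i, measurable_fun setT (fun xi => g x xi 0%R i).
Hypothesis g_moment : \int[D]_xi ((enorm (g x xi)) ^+ 2)%:E <= M%:E.

Lemma integrable_sqr_oracle : D.-integrable setT (fun xi => (dotv (g x xi) (g x xi))%:E).
Proof.
apply/integrableP; split.
  by apply/measurable_EFinP; apply: measurable_sum => i; exact: measurable_funM.
rewrite (eq_integral (fun xi => ((enorm (g x xi)) ^+ 2)%:E)); last first.
  by move=> xi _; rewrite gee0_abs ?lee_fin ?dotv_ge0 // enorm_sqr.
exact: le_lt_trans g_moment (ltry _).
Qed.

(* Dominated by 1 + |g x xi|^2, which is integrable because D is finite. *)
Lemma integrable_coord_oracle i : D.-integrable setT (fun xi => (g x xi 0%R i)%:E).
Proof.
apply: (le_integrable measurableT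
  (g := (EFin \o cst 1%R) \+ (fun xi => (dotv (g x xi) (g x xi))%:E))).
- exact/measurable_EFinP.
- move=> xi _ /=; rewrite lee_fin (ger0_norm (x := (1 + _)%R)) ?addr_ge0 ?dotv_ge0 //.
  have coord_le : (g x xi 0%R i ^+ 2 <= dotv (g x xi) (g x xi))%R.
    rewrite /dotv (bigD1 i) //= expr2 lerDl.
    by apply: sumr_ge0 => j _; rewrite -expr2 sqr_ge0.
  have : (`|g x xi 0%R i| <= 1 + g x xi 0%R i ^+ 2)%R.
    rewrite -real_normK ?num_real //; have := sqr_ge0 (`|g x xi 0%R i| - 1)%R; nra.
  by move/le_trans; apply; rewrite lerD2l.
- apply: integrableD => //; last exact: integrable_sqr_oracle.
  exact: finite_measure_integrable_cst.
Qed.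

Lemma integrable_dotv_oracle v : D.-integrable setT (fun xi => (dotv v (g x xi))%:E).
Proof.
under eq_fun do rewrite /dotv -sumEFin.
apply: integrable_sum => // i _; under eq_fun do rewrite EFinM.
exact/integrableZl/integrable_coord_oracle.
Qed.

Lemma integral_dotv_oracle v :
  \int[D]_xi (dotv v (g x xi))%:E = (dotv v (mean_oracle D g x))%:E.
Proof.
under eq_integral do rewrite /dotv -sumEFin.
rewrite integral_sum // => [|i]; last first.
  by under eq_fun do rewrite EFinM; exact/integrableZl/integrable_coord_oracle.
rewrite /dotv -sumEFin; apply: eq_bigr => i _; under eq_integral do rewrite EFinM.
rewrite integralZl ?integrable_coord_oracle // mxE EFinM fineK //.
exact/(integrable_fin_num measurableT)/integrable_coord_oracle.
Qed.

Lemma integral_sqr_dist_step (v : 'rV[R]_d) (K c a : R) : (0 <= c)%R ->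
  \int[D]_xi (K + c * dotv (v + (- a) *: g x xi) (v + (- a) *: g x xi))%:E <=
  (K + c * (dotv v v - 2 * a * dotv v (mean_oracle D g x) + a ^+ 2 * M))%:E.
Proof.
move=> c0.
rewrite (eq_integral (fun xi => ((K + c * dotv v v)%:E +
    (c * (2 * - a))%:E * (dotv v (g x xi))%:E) +
    (c * a ^+ 2)%:E * (dotv (g x xi) (g x xi))%:E)); last first.
  by move=> xi _; rewrite dotv_sqrD !dotvZl !dotvZr -!EFinM -!EFinD; congr EFin; ring.
have K_int : D.-integrable setT (fun _ => (K + c * dotv v v)%:E).
  exact: finite_measure_integrable_cst.
have dotv_int := integrable_dotv_oracle v.
have sqr_int := integrable_sqr_oracle.
rewrite integralD //; last 2 first.
- by apply: integrableD => //; exact: integrableZl.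
- exact: integrableZl.
rewrite integralD //; last exact: integrableZl.
rewrite integral_cst // [X in (_ * X)%E]probability_setT mule1 !integralZl //.
rewrite integral_dotv_oracle.
have sqr_fin := integrable_fin_num measurableT sqr_int.
rewrite -(fineK sqr_fin) -!EFinM -!EFinD lee_fin.
have moment_le : (fine (\int[D]_xi (dotv (g x xi) (g x xi))%:E) <= M)%R.
  rewrite -lee_fin fineK //; apply: le_trans g_moment.
  by under eq_integral do rewrite -enorm_sqr.
have ca2_ge0 : (0 <= c * a ^+ 2)%R by rewrite mulr_ge0 // sqr_ge0.
nra.
Qed.

End OracleMoments.

Local Close Scope ereal_scope.

Section SGD.
Variables (R : realType) (d : nat) (dX : measure_display) (Xi : measurableType dX).
Variables (D : probability Xi R) (f : 'rV[R]_d -> \bar R) (Q : set 'rV[R]_d).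
Variables (P : 'rV[R]_d -> 'rV[R]_d) (g : 'rV[R]_d -> Xi -> 'rV[R]_d).
Variables (L0 L1 fstar : R) (xstar x0 : 'rV[R]_d).
Hypothesis f_neqNy : forall x, f x != -oo%E.
Hypothesis f_dom : forall x, Q x -> (f x < +oo)%E.
Hypothesis f_convex : convex_efun f.
Hypothesis cQ : convex_set Q.
Hypothesis Qxstar : Q xstar.
Hypothesis xstar_min : forall x, Q x -> (f xstar <= f x)%E.
Hypothesis f_xstar : f xstar = fstar%:E.
Hypothesis P_proj : forall x, is_proj Q x (P x).
Hypothesis g_meas : forall x i, measurable_fun setT (fun xi => g x xi 0%R i).
Hypothesis g_subdiff : forall x, Q x -> subdiff f x (mean_oracle D g x).
Hypothesis g_moment : forall x, Q x ->
  (\int[D]_xi ((enorm (g x xi)) ^+ 2)%:E <= (L0 ^+ 2 + L1 * (fine (f x) - fstar))%:E)%E.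
Hypothesis Qx0 : Q x0.

Lemma gap_ge0 x : Q x -> 0 <= fine (f x) - fstar.
Proof.
move=> Qx; rewrite subr_ge0 -lee_fin -f_xstar.
by rewrite fineK ?(dom_fin_num f_neqNy f_dom Qx) ?xstar_min.
Qed.

Lemma gap_le_dotv_mean x : Q x ->
  fine (f x) - fstar <= dotv (x - xstar) (mean_oracle D g x).
Proof.
move=> Qx; have := g_subdiff Qx xstar.
rewrite -(fineK (dom_fin_num f_neqNy f_dom Qx)) f_xstar -EFinD lee_fin.
by rewrite -opprB dotvC dotvNl; lra.
Qed.

Lemma sgd_run_in alpha k x s : Q x -> Q (sgd_run P g alpha k x s).
Proof.
elim: s k x => [|xi s IH] k x Qx //=.
by apply: IH; case: (P_proj (x - alpha k *: g x xi)).
Qed.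

Lemma sgd_run_step0 k s : sgd_run P g (fun _ => 0) k x0 s = x0.
Proof.
elim: s k => [|xi s IH] k //=.
by rewrite scale0r subr0 (proj_id (P_proj x0) Qx0) IH.
Qed.

Lemma sgd_step_descent x (a K c : R) : Q x -> 0 <= a -> 0 <= K -> 0 <= c ->
  (\int[D]_xi (K + c * dotv (P (x - a *: g x xi) - xstar) (P (x - a *: g x xi) - xstar))%:E
  <= (K + c * (dotv (x - xstar) (x - xstar)
               - a * (2 - L1 * a) * (fine (f x) - fstar) + a ^+ 2 * L0 ^+ 2))%:E)%E.
Proof.
move=> Qx a0 K0 c0.
apply: le_trans (@ge0_le_integralT _ _ _ _ _
  (fun xi => (K + c * dotv (x - xstar + (- a) *: g x xi) (x - xstar + (- a) *: g x xi))%:E)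
  _ _) _ => [xi|xi|].
- by rewrite lee_fin addr_ge0 // mulr_ge0 // dotv_ge0.
- rewrite lee_fin lerD2l ler_wpM2l //.
  have -> : x - xstar + - a *: g x xi = x - a *: g x xi - xstar.
    by rewrite scaleNr addrAC.
  exact: (proj_sqr_dist_le cQ (P_proj (x - a *: g x xi)) Qxstar).
apply: le_trans (integral_sqr_dist_step (g_meas x) (g_moment Qx) _ _ _ c0) _.
rewrite lee_fin lerD2l ler_wpM2l //.
have := gap_le_dotv_mean Qx; have := gap_ge0 Qx; nra.
Qed.

Definition sgd_weight (alpha : nat -> R) k := alpha k * (2 - L1 * alpha k).

Section Potential.
Variable alpha : nat -> R.
Hypothesis alpha_gt0 : forall k, 0 < alpha k.
Hypothesis L1alpha_lt2 : forall k, L1 * alpha k < 2.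

Lemma sgd_weight_gt0 k : 0 < sgd_weight alpha k.
Proof. by rewrite mulr_gt0 // subr_gt0. Qed.

Fixpoint sgd_potential k x s :=
  match s with
  | [::] => dotv (x - xstar) (x - xstar)
  | xi :: s' => sgd_weight alpha k * (fine (f x) - fstar)
                + sgd_potential k.+1 (P (x - alpha k *: g x xi)) s'
  end.

Lemma sgd_potential_ge0 k x s : Q x -> 0 <= sgd_potential k x s.
Proof.
elim: s k x => [|xi s IH] k x Qx /=; first exact: dotv_ge0.
apply: addr_ge0; first by rewrite mulr_ge0 ?gap_ge0 // ltW ?sgd_weight_gt0.
by apply: IH; case: (P_proj (x - alpha k *: g x xi)).
Qed.

Lemma weighted_gap_le_potential k x s :
  \sum_(j < size s) sgd_weight alpha (k + j) *
     (fine (f (sgd_run P g alpha k x (take j s))) - fstar)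
  <= sgd_potential k x s.
Proof.
elim: s k x => [|xi s IH] k x /=; first by rewrite big_ord0 dotv_ge0.
rewrite big_ord_recl /= addn0 lerD2l.
apply: le_trans (IH _ _); rewrite le_eqVlt; apply/predU1l.
by apply: eq_bigr => j _; rewrite /bump /= add1n addnS.
Qed.

(* The affine parameters b, c are carried through the induction because
   iid_expect is monotone but not known to be linear. *)
Lemma iid_expect_potential_le n k x (b c : R) : Q x -> 0 <= b -> 0 <= c ->
  (iid_expect D n (fun s => (b + c * sgd_potential k x s)%:E) <=
  (b + c * (dotv (x - xstar) (x - xstar)
            + L0 ^+ 2 * \sum_(j < n) alpha (k + j) ^+ 2))%:E)%E.
Proof.
elim: n k x b c => [|n IH] k x b c Qx b0 c0 /=.
  by rewrite big_ord0 mulr0 addr0.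
set gap := fine (f x) - fstar.
have gap0 : 0 <= gap := gap_ge0 Qx.
have w0 : 0 <= sgd_weight alpha k := ltW (sgd_weight_gt0 k).
set S := \sum_(j < n) alpha (k.+1 + j) ^+ 2.
have S0 : 0 <= S by apply: sumr_ge0 => j _; exact: sqr_ge0.
have b'0 : 0 <= b + c * (sgd_weight alpha k * gap).
  by apply: addr_ge0 => //; apply: mulr_ge0 => //; exact: mulr_ge0.
apply: le_trans (@ge0_le_integralT _ _ _ _ _
  (fun xi => ((b + c * (sgd_weight alpha k * gap) + c * (L0 ^+ 2 * S)) + c *
     dotv (P (x - alpha k *: g x xi) - xstar) (P (x - alpha k *: g x xi) - xstar))%:E)
  _ _) _ => [xi|xi|].
- apply: iid_expect_ge0 => s _; rewrite lee_fin; apply/addr_ge0/mulr_ge0 => //.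
  apply: addr_ge0; first exact: mulr_ge0.
  by apply: sgd_potential_ge0; case: (P_proj (x - alpha k *: g x xi)).
- under eq_fun do rewrite mulrDr addrA.
  apply: le_trans (IH _ _ _ _ _ b'0 c0) _; first by case: (P_proj (x - alpha k *: g x xi)).
  by rewrite lee_fin -/S; lra.
have K0 : 0 <= b + c * (sgd_weight alpha k * gap) + c * (L0 ^+ 2 * S).
  by rewrite addr_ge0 // mulr_ge0 // mulr_ge0 ?sqr_ge0.
apply: le_trans (sgd_step_descent Qx (ltW (alpha_gt0 k)) K0 c0) _.
rewrite lee_fin big_ord_recl addn0 -/gap.
have -> : \sum_(i < n) alpha (k + bump 0 i) ^+ 2 = S.
  by apply: eq_bigr => j _; rewrite /bump /= add1n addnS.
rewrite /sgd_weight; lra.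
Qed.

Definition sgd_average T s := (\sum_(k < T.+1) sgd_weight alpha k)^-1 *:
  \sum_(k < T.+1) sgd_weight alpha k *: sgd_iter P g alpha x0 k s.

Lemma sgd_average_in T s : Q (sgd_average T s).
Proof.
exact: (jensen_dom f_neqNy f_dom f_convex cQ T sgd_weight_gt0
  (fun k => sgd_run_in alpha 0 (take k s) Qx0)).1.
Qed.

Lemma sgd_average_gap_le T s : size s = T.+1 ->
  fine (f (sgd_average T s)) - fstar
  <= (\sum_(k < T.+1) sgd_weight alpha k)^-1 * sgd_potential 0 x0 s.
Proof.
move=> size_s; set W := \sum_(k < T.+1) sgd_weight alpha k.
have W_gt0 : 0 < W := sumr_ord_gt0 T sgd_weight_gt0.
have jensen := (jensen_dom f_neqNy f_dom f_convex cQ T sgd_weight_gt0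
  (x := fun k => sgd_iter P g alpha x0 k s) (fun k => sgd_run_in alpha 0 (take k s) Qx0)).2.
set A := \sum_(k < T.+1) sgd_weight alpha k * fine (f (sgd_iter P g alpha x0 k s)).
have gaps_le := weighted_gap_le_potential 0 x0 s; rewrite size_s in gaps_le.
have gap_sum : \sum_(k < T.+1) sgd_weight alpha (0 + k) *
    (fine (f (sgd_run P g alpha 0 x0 (take k s))) - fstar) = A - W * fstar.
  by rewrite mulr_suml -sumrB; apply: eq_bigr => k _; rewrite add0n mulrBr.
have W'_ge0 : 0 <= W^-1 by rewrite invr_ge0 ltW.
have := ler_wpM2l W'_ge0 gaps_le; rewrite gap_sum.
have -> : W^-1 * (A - W * fstar) = W^-1 * A - fstar by field; rewrite gt_eqF.
rewrite /sgd_average -/W; rewrite -/W -/A in jensen; lra.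
Qed.

Lemma sgd_weighted_average_bound T :
  (iid_expect D T.+1 (fun s => f (sgd_average T s) - fstar%:E)
   <= (((enorm (x0 - xstar)) ^+ 2 + L0 ^+ 2 * \sum_(k < T.+1) alpha k ^+ 2)
         / \sum_(k < T.+1) sgd_weight alpha k)%:E)%E.
Proof.
set W := \sum_(k < T.+1) sgd_weight alpha k.
have W_gt0 : 0 < W := sumr_ord_gt0 T sgd_weight_gt0.
have W'_ge0 : 0 <= W^-1 by rewrite invr_ge0 ltW.
apply: (@le_trans _ _ (iid_expect D T.+1 (fun s => (0 + W^-1 * sgd_potential 0 x0 s)%:E))).
  apply: le_iid_expect => s size_s;
    rewrite -(fineK (dom_fin_num f_neqNy f_dom (sgd_average_in T s))) -EFinB lee_fin.
  - exact/gap_ge0/sgd_average_in.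
  - by rewrite add0r; exact: sgd_average_gap_le.
apply: le_trans (iid_expect_potential_le T.+1 0 Qx0 (lexx 0) W'_ge0) _.
rewrite lee_fin add0r enorm_sqr mulrC; under eq_bigr do rewrite add0n.
exact: lexx.
Qed.

End Potential.

Lemma sgd_constant_step_bound T : 0 < L0 ->
  let a := enorm (x0 - xstar) / (L0 * Num.sqrt (T.+1)%:R) in
  L1 * a < 2 ->
  (iid_expect D T.+1
     (fun s => f ((T.+1)%:R^-1 *: \sum_(k < T.+1) sgd_iter P g (fun _ => a) x0 k s)
               - fstar%:E)
   <= (L0 * enorm (x0 - xstar) / Num.sqrt (T.+1)%:R * (2 / (2 - L1 * a)))%:E)%E.
Proof.
move=> L0_gt0 a L1a_lt2.
set q := Num.sqrt (T.+1)%:R; set r := enorm (x0 - xstar).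
have q_gt0 : 0 < q by rewrite sqrtr_gt0 ltr0n.
(* If x0 = xstar the step a is 0, outside the first bound, and the run stays at xstar. *)
have [r0|r_neq0] := eqVneq r 0.
  have x0_xstar : x0 = xstar by apply/eqP; rewrite -subr_eq0 -enorm_eq0 -/r r0.
  have a0 : a = 0 by rewrite /a -/r r0 mul0r.
  rewrite r0 mulr0 !mul0r (_ : (fun s => _) = fun _ => 0%E) ?iid_expect0 //.
  apply/funext => s; rewrite a0; under eq_bigr do rewrite /sgd_iter sgd_run_step0.
  rewrite sumr_const card_ord -[x0 *+ _]scaler_nat scalerA mulVf ?pnatr_eq0 // scale1r.
  by rewrite x0_xstar f_xstar subee.
have r_gt0 : 0 < r by rewrite lt_neqAle eq_sym r_neq0 enorm_ge0.
have a_gt0 : 0 < a by rewrite divr_gt0 // mulr_gt0.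
have bound := sgd_weighted_average_bound (fun _ => a_gt0) (fun _ => L1a_lt2) T.
rewrite /sgd_average /sgd_weight in bound; cbv beta in bound.
have w_neq0 : a * (2 - L1 * a) != 0 by rewrite gt_eqF // mulr_gt0 // subr_gt0.
under eq_fun => s do
  rewrite -(scale_mean_const T (fun k => sgd_iter P g (fun=> a) x0 k s) w_neq0).
apply: le_trans bound _.
rewrite lee_fin !sumr_const !card_ord -[_ ^+ 2 *+ _]mulr_natr -[(_ * _) *+ _]mulr_natr -/r.
have q2 : q ^+ 2 = (T.+1)%:R by rewrite sqr_sqrtr // ler0n.
have r_aL0q : r = a * L0 * q by rewrite /a -/r -/q; field; rewrite !gt_eqF.
rewrite -q2 r_aL0q le_eqVlt; apply/predU1l.
have [a_neq0 q_neq0 b_neq0] : [/\ a != 0, q != 0 & 2 - L1 * a != 0].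
  by rewrite !gt_eqF ?subr_gt0.
by clearbody a q; field; rewrite a_neq0 q_neq0 b_neq0.
Qed.

End SGD.

Theorem theorem1p6 (R : realType) (d : nat) (dX : measure_display)
  (Xi : measurableType dX) (D : probability Xi R)
  (f : 'rV[R]_d -> \bar R) (Q : set 'rV[R]_d) (P : 'rV[R]_d -> 'rV[R]_d)
  (g : 'rV[R]_d -> Xi -> 'rV[R]_d) (L0 L1 fstar : R) (xstar x0 : 'rV[R]_d) :
  (* f : R^d -> R \cup {+oo}, lower semicontinuous and convex *)
  (forall x, f x != -oo%E) ->
  lower_semicontinuous f ->
  convex_efun f ->
  (* Q nonempty, closed, convex, contained in dom f *)
  Q !=set0 -> closed Q -> convex_set Q -> (* library convex_set (convex.v) *)
  (forall x, Q x -> (f x < +oo)%E) ->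
  (* xstar \in X^*, f^* the minimum value of f over Q *)
  Q xstar -> (forall x, Q x -> (f xstar <= f x)%E) -> f xstar = fstar%:E ->
  (* P is the orthogonal projection onto Q *)
  (forall x, is_proj Q x (P x)) ->
  (* the oracle is (jointly) measurable *)
  (forall i, measurable_fun [set: (borelV R d * Xi)%type]
                (fun p : (borelV R d * Xi)%type => g p.1 p.2 0 i)) ->
  (* unbiasedness: E g(x; xi) \in \partial f(x) on Q *)
  (forall x, Q x -> subdiff f x (mean_oracle D g x)) ->
  (* second moment bound *)
  0 <= L0 -> 0 <= L1 ->
  (forall x, Q x ->
     (\int[D]_xi ((enorm (g x xi)) ^+ 2)%:E <= (L0 ^+ 2 + L1 * (fine (f x) - fstar))%:E)%E) ->
  Q x0 ->
  (forall alpha : nat -> R, (forall k, 0 < alpha k) -> (forall k, L1 * alpha k < 2) ->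
   forall T : nat,
     let w := fun k : nat => alpha k * (2 - L1 * alpha k) in
     (iid_expect D T.+1
        (fun s => f ((\sum_(k < T.+1) w k)^-1 *:
                       \sum_(k < T.+1) (w k *: sgd_iter P g alpha x0 k s)) - fstar%:E)
      <= (((enorm (x0 - xstar)) ^+ 2 + L0 ^+ 2 * \sum_(k < T.+1) alpha k ^+ 2)
            / \sum_(k < T.+1) w k)%:E)%E)
  /\
  (0 < L0 -> forall T : nat,
     let a := enorm (x0 - xstar) / (L0 * Num.sqrt (T.+1)%:R) in
     L1 * a < 2 ->
     (iid_expect D T.+1
        (fun s => f ((T.+1)%:R^-1 *: \sum_(k < T.+1) sgd_iter P g (fun _ => a) x0 k s)
                  - fstar%:E)
      <= (L0 * enorm (x0 - xstar) / Num.sqrt (T.+1)%:R * (2 / (2 - L1 * a)))%:E)%E).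
Proof.
(* Lower semicontinuity, closedness and nonemptiness of Q only make P_Q well
   defined, and P is given. *)
move=> f_neqNy _ f_convex _ _ cQ f_dom Qxstar xstar_min f_xstar P_proj g_meas g_subdiff
  _ _ g_moment Qx0.
have g_meas_x x i : measurable_fun setT (fun xi => g x xi 0%R i).
  exact: (measurable_fun_pair2 (x : borelV R d) (g_meas i)).
split=> [alpha alpha_gt0 L1alpha_lt2 T|L0_gt0 T].
- exact: (sgd_weighted_average_bound f_neqNy f_dom f_convex cQ Qxstar xstar_min f_xstar
    P_proj g_meas_x g_subdiff g_moment Qx0 alpha_gt0 L1alpha_lt2 T).
- exact: (sgd_constant_step_bound f_neqNy f_dom f_convex cQ Qxstar xstar_min f_xstar
    P_proj g_meas_x g_subdiff g_moment Qx0 L0_gt0).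
Qed.
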